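(* Let $r\geq 1$ and $n_1,\ldots,n_r>1$ be integers, let $R=\mathbb{Z}_{n_1}\oplus\cdots\oplus \mathbb{Z}_{n_r}$, and let $\mathcal{S}_R$ be the multiplicative semigroup of $R$, with its operation written as $+$. Let $a,b\in\mathcal{S}_R$. Then: (i) If $a \leqq_{\mathcal{H}} b$, then $\gcd(\kappa_i(\theta_b),n_i)\mid \gcd(\kappa_i(\theta_a),n_i)$ for each $i\in [1,r]$, and ${\rm St}(b)\subseteq{\rm St}(a)$. (ii) $a \ \mathcal{H} \ b$ if and only if $\gcd(\kappa_i(\theta_b),n_i)= \gcd(\kappa_i(\theta_a),n_i)$ for each $i\in [1,r]$. (iii) Suppose $a <_{\mathcal{H}} b$. If there exists an index $t\in [1,r]$ such that either ${\rm pot}_{p}(\gcd(\kappa_t(\theta_b), n_t))<{\rm pot}_{p}(\gcd(\kappa_t(\theta_a), n_t))$ for some prime $p>2$, or ${\rm pot}_2(\gcd(\kappa_t(\theta_b), n_t))<{\rm pot}_2(\gcd(\kappa_t(\theta_a), n_t))< {\rm pot}_2(n_t)$, then ${\rm St}(b)\subsetneq {\rm St}(a)$.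
   Context: The operation of $\mathcal{S}_R$ is the ring multiplication of $R$, written additively as $+$; its identity element $0_{\mathcal{S}_R}$ is $(\overline{1},\ldots,\overline{1})$, and ${\rm U}(\mathcal{S}_R)$ is its group of units (elements with an inverse under this operation). For ${\bf a}\in\mathcal{S}_R$, $\theta_{\bf a}=(a_1,\ldots,a_r)\in[1,n_1]\times\cdots\times[1,n_r]$ is the unique integer tuple with ${\bf a}=(\overline{a}_1,\ldots,\overline{a}_r)$, and $\kappa_i(\theta_{\bf a})=a_i$. For $c\in\mathcal{S}_R$, ${\rm St}(c)=\{u\in {\rm U}(\mathcal{S}_R): u+c=c\}$. Green's preorder: $a\leqq_{\mathcal{H}} b$ iff $a=b$ or $a=b+c$ for some $c\in\mathcal{S}_R$; $a\ \mathcal{H}\ b$ iff $a\leqq_{\mathcal{H}} b$ and $b\leqq_{\mathcal{H}} a$; $a<_{\mathcal{H}} b$ means $a\leqq_{\mathcal{H}} b$ but not $a\ \mathcal{H}\ b$. For a prime $p$ and nonzero integer $n$, ${\rm pot}_p(n)$ is the largest $k$ with $p^k\mid n$. *)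

From mathcomp Require Import all_boot.
Set Implicit Arguments. Unset Strict Implicit. Unset Printing Implicit Defensive.

(* R = Z_{n_1} (+) ... (+) Z_{n_r}, indices 'I_r.  An element of S_R is
   represented by its residue vector x with 0 <= x i < n i. *)
Section SR.
Variables (r : nat) (n : 'I_r -> nat).

Definition SR_elt (x : {ffun 'I_r -> nat}) : Prop := forall i, x i < n i.

(* the semigroup operation "+" of S_R (= ring multiplication of R) *)
Definition SR_add (x y : {ffun 'I_r -> nat}) : {ffun 'I_r -> nat} :=
  [ffun i => (x i * y i) %% n i].

Definition SR_zero : {ffun 'I_r -> nat} := [ffun i => 1 %% n i].

Definition SR_unit (u : {ffun 'I_r -> nat}) : Prop :=
  SR_elt u /\ exists v, SR_elt v /\ SR_add u v = SR_zero.

Definition St (c : {ffun 'I_r -> nat}) (u : {ffun 'I_r -> nat}) : Prop :=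
  SR_unit u /\ SR_add u c = c.

(* theta_a, with kappa_i(theta_a) in [1, n_i] *)
Definition kappa_theta (a : {ffun 'I_r -> nat}) (i : 'I_r) : nat :=
  if a i == 0 then n i else a i.

Definition Hle (a b : {ffun 'I_r -> nat}) : Prop :=
  a = b \/ exists c, SR_elt c /\ a = SR_add b c.
Definition Hrel (a b : {ffun 'I_r -> nat}) : Prop := Hle a b /\ Hle b a.
Definition Hlt (a b : {ffun 'I_r -> nat}) : Prop := Hle a b /\ ~ Hrel a b.

End SR.

Definition pot (p m : nat) : nat := logn p m.

From mathcomp Require Import all_boot zify.
Set Implicit Arguments. Unset Strict Implicit. Unset Printing Implicit Defensive.

(* Componentwise, a <=_H b in Z_n amounts to gcd(b, n) | gcd(a, n): every
   multiple of b mod n is divisible by gcd(b, n), and conversely Bezout solves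
   a = b c mod n.  For (iii), a unit 1 + k of Z_n fixes a iff
   n / gcd(a, n) | k.  With k = n_{p'} (n / gcd(a, n)) s and p not dividing s,
   v_p(k) = v_p(n) - v_p(gcd(a, n)) < v_p(n / gcd(b, n)), so 1 + k fixes a but
   not b; it is prime to n_{p'}, and s in {1, 2} makes it prime to p unless
   p = 2 does not divide n / gcd(a, n), i.e. v_2(gcd(a, n)) = v_2(n). *)

Lemma dvdn_gcd_modnMr a c n : gcdn a n %| gcdn (a * c %% n) n.
Proof.
rewrite dvdn_gcd dvdn_gcdr andbT.
by rewrite /dvdn (modn_dvdm _ (dvdn_gcdr a n)) -/(dvdn _ _) dvdn_mulr ?dvdn_gcdl.
Qed.

Lemma modn_Bezout b n : 0 < n -> exists x, x * b = gcdn b n %[mod n].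
Proof.
move=> n_gt0; have [x _ /dvdnP[k def_k]] := Bezoutr b n_gt0.
exists (x * n.-1); apply/eqP; rewrite -(eqn_modDr (x * b)) def_k modnMl.
by rewrite -mulnA -mulnDr addnC -mulSn prednK // mulnCA modnMr.
Qed.

Lemma modn_solve a b n : 0 < n -> a < n -> gcdn b n %| a ->
  exists2 c, c < n & a = b * c %% n.
Proof.
move=> n_gt0 lt_an /dvdnP[a' def_a]; have [x def_gcd] := modn_Bezout b n_gt0.
exists (x * a' %% n); first by rewrite ltn_mod.
rewrite modnMmr mulnA [b * x]mulnC -modnMml def_gcd modnMml.
by rewrite mulnC -def_a modn_small.
Qed.

Lemma coprime_modn_inv u n : 0 < n -> coprime u n -> exists v, u * v = 1 %[mod n].
Proof.
move=> n_gt0 /eqP co_un; have [x def_gcd] := modn_Bezout u n_gt0.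
by exists x; rewrite mulnC def_gcd co_un.
Qed.

Lemma mulSn_modn_fix k a n : 0 < n ->
  (k.+1 * a == a %[mod n]) = (n %/ gcdn a n %| k).
Proof.
move=> n_gt0; rewrite dvdn_divLR ?gcdn_gt0 ?n_gt0 ?orbT ?dvdn_gcdr //.
rewrite muln_gcdr dvdn_gcd [n %| k * n]dvdn_mull // andbT.
by rewrite mulSn -[X in _ == X %[mod _]]addn0 eqn_modDl mod0n.
Qed.

Lemma exists_indivisible_mulS p x : prime p -> p %| x \/ 2 < p ->
  exists2 s, ~~ (p %| s) & ~~ (p %| (x * s).+1).
Proof.
move=> p_pr p_cond; have p_ndvd1 : ~~ (p %| 1) by rewrite dvdn1 gtn_eqF ?prime_gt1.
have [p_dvd_x | p_ndvd_x] := boolP (p %| x).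
  by exists 1; rewrite // muln1 -addn1 dvdn_addr.
have p_gt2 : 2 < p by case: p_cond p_ndvd_x => // ->.
have [p_dvd_x1 | ] := boolP (p %| (x * 1).+1); last by exists 1.
exists 2; first by apply/negP => /dvdn_leq; lia.
have -> : (x * 2).+1 = x + (x * 1).+1 by lia.
by rewrite dvdn_addl.
Qed.

Lemma coprime_succ_part p k n : 0 < n -> prime p ->
  n`_p^' %| k -> ~~ (p %| k.+1) -> coprime k.+1 n.
Proof.
move=> n_gt0 p_pr /dvdnP[j ->] p_ndvd.
rewrite -[X in coprime _ X](partnC p n_gt0) coprimeMr; apply/andP; split.
  by rewrite p_part coprimeXr // coprime_sym prime_coprime.
by rewrite /coprime gcdnC -addn1 gcdnMDl gcdn1.
Qed.

Lemma exists_unit_fix_nfix a b n p : 0 < n -> prime p ->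
  logn p (gcdn b n) < logn p (gcdn a n) ->
  2 < p \/ logn p (gcdn a n) < logn p n ->
  exists u, [/\ coprime u n, u * a = a %[mod n] & u * b != b %[mod n]].
Proof.
move=> n_gt0 p_pr lt_ba p_cond.
set m := n %/ gcdn a n; set q := n`_p^'.
have le_an : logn p (gcdn a n) <= logn p n := dvdn_leq_log p n_gt0 (dvdn_gcdr a n).
have logn_m : logn p m = logn p n - logn p (gcdn a n) := logn_div p (dvdn_gcdr a n).
have [s p_ndvd_s p_ndvd_u] : exists2 s, ~~ (p %| s) & ~~ (p %| (q * m * s).+1).
  apply: exists_indivisible_mulS => //; case: p_cond => [|lt_an]; [by right | left].
  have : 0 < logn p m by rewrite logn_m subn_gt0.
  by rewrite logn_gt0 mem_primes => /and3P[_ _ /dvdn_mull->].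
exists (q * m * s).+1; split.
- by apply: coprime_succ_part p_pr _ p_ndvd_u; rewrite // -mulnA dvdn_mulr.
- by apply/eqP; rewrite mulSn_modn_fix // mulnAC dvdn_mull.
rewrite mulSn_modn_fix //; apply/negP => dvd_b.
have s_gt0 : 0 < s by case: s p_ndvd_s {p_ndvd_u dvd_b}; rewrite ?dvdn0.
have m_gt0 : 0 < m by rewrite divn_gt0 ?gcdn_gt0 ?n_gt0 ?orbT // dvdn_leq ?dvdn_gcdr.
have q_gt0 : 0 < q := part_gt0 _ _.
have qms_gt0 : 0 < q * m * s by rewrite !muln_gt0 q_gt0 m_gt0 s_gt0.
have := dvdn_leq_log p qms_gt0 dvd_b.
rewrite lognM ?muln_gt0 ?q_gt0 ?m_gt0 // lognM // logn_div ?dvdn_gcdr // logn_m.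
rewrite (logn_coprime (pnat_coprime (pnat_id p_pr) (part_pnat _ _))).
rewrite (logn_coprime (m := s)) ?prime_coprime //.
move: le_an lt_ba; move: (logn p n) (logn p (gcdn a n)) (logn p (gcdn b n)).
clear; lia.
Qed.

Section GreenH.
Variables (r : nat) (n : 'I_r -> nat).

Lemma gcdn_kappa_theta x i : gcdn (kappa_theta n x i) (n i) = gcdn (x i) (n i).
Proof. by rewrite /kappa_theta; case: eqP => [->|//]; rewrite gcdnn gcd0n. Qed.

Lemma SR_addA x y z : SR_add n x (SR_add n y z) = SR_add n (SR_add n x y) z.
Proof. by apply/ffunP => i; rewrite !ffunE modnMmr modnMml mulnA. Qed.

Lemma Hle_St a b u : Hle n a b -> St n b u -> St n a u.
Proof. by case=> [-> //|[c [_ ->]]] [unit_u fix_b]; split; rewrite // SR_addA fix_b. Qed.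

Hypothesis n_gt0 : forall i, 0 < n i.

Lemma Hle_gcdnP a b : SR_elt n a ->
  Hle n a b <-> forall i, gcdn (b i) (n i) %| gcdn (a i) (n i).
Proof.
move=> a_elt; split=> [[-> //|[c [_ ->]]] i|dvd_ba]; first by rewrite ffunE dvdn_gcd_modnMr.
have /fin_all_exists2[c c_lt def_a] :
    forall i, exists2 c, c < n i & a i = b i * c %% n i.
  by move=> i; apply: modn_solve; rewrite // (dvdn_trans (dvd_ba i)) ?dvdn_gcdl.
right; exists [ffun i => c i]; split=> [i|]; first by rewrite ffunE.
by apply/ffunP => i; rewrite !ffunE.
Qed.

Lemma St_separate (a b : {ffun 'I_r -> nat}) t U : SR_elt n a ->
  coprime U (n t) -> U * a t = a t %[mod n t] -> U * b t != b t %[mod n t] ->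
  exists u, St n a u /\ ~ St n b u.
Proof.
move=> a_elt co_U fix_a nfix_b; have [V UV] := coprime_modn_inv (n_gt0 t) co_U.
pose lift (x : nat) := [ffun i => (if i == t then x else 1) %% n i].
have lift_elt x : SR_elt n (lift x) by move=> i; rewrite ffunE ltn_mod.
exists (lift U); split.
  split; first split=> //.
    exists (lift V); split=> //; apply/ffunP => i; rewrite !ffunE modnMml modnMmr.
    by case: eqP => [->|_]; rewrite ?UV.
  apply/ffunP => i; rewrite !ffunE modnMml.
  by case: eqP => [->|_]; rewrite ?fix_a ?mul1n modn_small.
case=> _ /(congr1 (fun f : {ffun 'I_r -> nat} => f t)).
rewrite !ffunE eqxx modnMml => fix_b.
by rewrite -{2}fix_b modn_mod eqxx in nfix_b.
Qed.

End GreenH.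

Theorem lemma2p2 (r : nat) (hr : 0 < r) (n : 'I_r -> nat)
  (hn : forall i, 1 < n i) (a b : {ffun 'I_r -> nat})
  (ha : SR_elt n a) (hb : SR_elt n b) :
  (* (i) *)
  (Hle n a b ->
     (forall i : 'I_r,
        gcdn (kappa_theta n b i) (n i) %| gcdn (kappa_theta n a i) (n i)) /\
     (forall u, St n b u -> St n a u)) /\
  (* (ii) *)
  (Hrel n a b <->
     (forall i : 'I_r,
        gcdn (kappa_theta n b i) (n i) = gcdn (kappa_theta n a i) (n i))) /\
  (* (iii) *)
  (Hlt n a b ->
     (exists t : 'I_r,
        (exists p, prime p /\ 2 < p /\
           pot p (gcdn (kappa_theta n b t) (n t)) <
           pot p (gcdn (kappa_theta n a t) (n t))) \/
        (pot 2 (gcdn (kappa_theta n b t) (n t)) <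
         pot 2 (gcdn (kappa_theta n a t) (n t)) /\
         pot 2 (gcdn (kappa_theta n a t) (n t)) < pot 2 (n t))) ->
     (forall u, St n b u -> St n a u) /\ (exists u, St n a u /\ ~ St n b u)).
Proof.
have n_gt0 i : 0 < n i := ltnW (hn i).
split; [|split].
- move=> le_ab; split=> [i|u]; last exact: Hle_St.
  by rewrite !gcdn_kappa_theta; apply: (Hle_gcdnP n_gt0 b ha).1.
- rewrite /Hrel !Hle_gcdnP //; split=> [[dvd_ba dvd_ab] i|eq_ba].
    by rewrite !gcdn_kappa_theta; apply/eqP; rewrite eqn_dvd dvd_ab dvd_ba.
  by split=> i; have := eq_ba i; rewrite !gcdn_kappa_theta => ->.
case=> le_ab _ [t]; rewrite /pot !gcdn_kappa_theta => drop_t.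
split=> [u|]; first exact: Hle_St.
have [p [p_pr lt_ba p_cond]] : exists p, [/\ prime p,
    logn p (gcdn (b t) (n t)) < logn p (gcdn (a t) (n t)) &
    2 < p \/ logn p (gcdn (a t) (n t)) < logn p (n t)].
  case: drop_t => [[p [p_pr [p_gt2 lt_ba]]] | [lt_ba lt_an]].
    by exists p; split=> //; left.
  by exists 2; split=> //; right.
have [U [co_U fix_a nfix_b]] := exists_unit_fix_nfix (n_gt0 t) p_pr lt_ba p_cond.
exact: St_separate fix_a nfix_b.
Qed.
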